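(* For every integer $d\ge2$, the degree map $\deg:[\mathbf{P}^1,\mathbf{P}^d]^{\mathrm{N}}\to\mathbf{N}$ is a bijection.
   Context: Let $k$ be a field and $d\ge2$. For $n\ge0$ and a $k$-algebra $R$, $\mathcal{F}^d_n(R)$ is the set of pairs $(A,B)$ where $A\in R[X]$ is monic of degree $n$ and $B=(B_1,\dots,B_d)$ is a $d$-tuple of polynomials of degree $<n$ such that $A,B_1,\dots,B_d$ generate the unit ideal of $R[X]$. Pointed scheme morphisms $\mathbf{P}^1_k\to\mathbf{P}^d_k$ (base points $\infty=[1:0]$ and $[1:0:\dots:0]$) correspond to pairs ($n$, element of $\mathcal{F}^d_n(k)$), $n$ being the degree; pointed naive homotopies $\mathbf{P}^1\times\mathbf{A}^1\to\mathbf{P}^d$ correspond to elements of $\mathcal{F}^d_n(k[T])$, with source and target obtained by evaluating at $T=0$ and $T=1$. $[\mathbf{P}^1,\mathbf{P}^d]^{\mathrm{N}}$ is the set of pointed morphisms modulo the equivalence relation generated by pointed naive homotopies. *)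

From HB Require Import structures.
From mathcomp Require Import all_boot all_order all_algebra.
From Stdlib Require Import Relations.
Set Implicit Arguments. Unset Strict Implicit. Unset Printing Implicit Defensive.
Import GRing.Theory.
Local Open Scope ring_scope.

Definition inF (d n : nat) (R : comNzRingType) (A : {poly R})
  (B : 'I_d -> {poly R}) : Prop :=
  [/\ A \is monic, size A = n.+1, (forall i, (size (B i) <= n)%N) &
      exists (U : {poly R}) (V : 'I_d -> {poly R}),
        U * A + \sum_(i < d) V i * B i = 1].

(* Pointed morphisms P^1 -> P^d over k: a degree n and an element of F^d_n(k). *)
Record ptmap (k : fieldType) (d : nat) := PtMap {
  pm_deg : nat;
  pm_A : {poly k};
  pm_B : 'I_d -> {poly k};
  pm_ok : inF pm_deg pm_A pm_B }.

Definition evT (k : fieldType) (t : k) (P : {poly {poly k}}) : {poly k} :=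
  map_poly (fun c : {poly k} => c.[t]) P.

Definition naive_htpy (k : fieldType) (d : nat) (f g : ptmap k d) : Prop :=
  exists (n : nat) (HA : {poly {poly k}}) (HB : 'I_d -> {poly {poly k}}),
    [/\ inF n HA HB,
        pm_deg f = n /\ pm_A f = evT 0 HA /\ (forall i, pm_B f i = evT 0 (HB i))
      & pm_deg g = n /\ pm_A g = evT 1 HA /\ (forall i, pm_B g i = evT 1 (HB i))].

(* the equivalence relation generated by pointed naive homotopies;
   [P^1, P^d]^N is ptmap k d modulo this relation *)
Definition naive_equiv (k : fieldType) (d : nat) : relation (ptmap k d) :=
  clos_refl_sym_trans (ptmap k d) (@naive_htpy k d).

From mathcomp Require Import all_boot all_order all_algebra.
From Stdlib Require Import Relations.
Set Implicit Arguments. Unset Strict Implicit. Unset Printing Implicit Defensive.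
Import GRing.Theory.
Local Open Scope ring_scope.

(* A pointed naive homotopy keeps the degree, which is part of its data, so
   [deg] is well defined; (1, 0) and (X^n, e_l) show that it is onto.
   For injectivity, every elementary operation B_j += c B_i (i <> j) that keeps
   deg B_j < n is realised by the straight-line homotopy (A, B + T c B_i e_j):
   over k[T][X] its components still generate the ideal spanned by A and the
   B's, hence the unit ideal.  Euclid's algorithm on (B_i, B_j), which needs
   d >= 2, therefore reaches a map with B_j = 0.  The line from B_j = 0 to
   B_j = 1 stays unimodular because the other components are untouched, and
   once B_j = 1 every straight line, in particular the one ending at the
   standard map (X^n, e_j), is unimodular. *)

Section Ideal.
Variable R : comNzRingType.

Definition in_ideal d (A : {poly R}) (B : 'I_d -> {poly R}) (x : {poly R}) :=
  exists (U : {poly R}) (V : 'I_d -> {poly R}), U * A + \sum_(i < d) V i * B i = x.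

Variables (d : nat) (A : {poly R}) (B : 'I_d -> {poly R}).

Lemma in_ideal0 : in_ideal A B 0.
Proof. by exists 0, (fun=> 0); rewrite mul0r add0r big1 // => i _; rewrite mul0r. Qed.

Lemma in_idealD x y : in_ideal A B x -> in_ideal A B y -> in_ideal A B (x + y).
Proof.
move=> [U [V <-]] [U' [V' <-]]; exists (U + U'), (fun i => V i + V' i).
under eq_bigr => i _ do rewrite mulrDl.
by rewrite mulrDl big_split /= addrACA.
Qed.

Lemma in_idealMl r x : in_ideal A B x -> in_ideal A B (r * x).
Proof.
move=> [U [V <-]]; exists (r * U), (fun i => r * V i).
by rewrite mulrDr mulr_sumr mulrA; congr (_ + _); apply: eq_bigr => i _; rewrite mulrA.
Qed.

Lemma in_idealB x y : in_ideal A B x -> in_ideal A B y -> in_ideal A B (x - y).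
Proof. by move=> Ix Iy; rewrite -mulN1r; apply/in_idealD/in_idealMl. Qed.

Lemma in_ideal_genA : in_ideal A B A.
Proof. by exists 1, (fun=> 0); rewrite mul1r big1 ?addr0 // => i _; rewrite mul0r. Qed.

Lemma in_ideal_genB j : in_ideal A B (B j).
Proof.
exists 0, (fun i => (i == j)%:R); rewrite mul0r add0r (bigD1 j) //= eqxx mul1r.
by rewrite big1 ?addr0 // => i /negbTE ->; rewrite mul0r.
Qed.

Lemma in_ideal_trans d' (A' : {poly R}) (B' : 'I_d' -> {poly R}) x :
  in_ideal A B A' -> (forall i, in_ideal A B (B' i)) ->
  in_ideal A' B' x -> in_ideal A B x.
Proof.
move=> IA IB [U [V <-]]; apply: in_idealD; first exact: in_idealMl.
by elim/big_ind: _ => [|y z|i _]; [exact: in_ideal0 | exact: in_idealD | exact: in_idealMl].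
Qed.

End Ideal.

Lemma in_ideal_addB (R : comNzRingType) d (A : {poly R}) (B B' : 'I_d -> {poly R})
    (i j : 'I_d) c :
  i != j -> (forall l, l != j -> B' l = B l) -> B' j = B j + c * B i ->
  in_ideal A B 1 -> in_ideal A B' 1.
Proof.
move=> nij B'B B'j; apply: in_ideal_trans (in_ideal_genA _ _) _ => l.
have [->|nlj] := eqVneq l j; last by rewrite -B'B //; apply: in_ideal_genB.
have -> : B j = B' j - c * B' i by rewrite B'j B'B // addrK.
by apply: in_idealB; [|apply: in_idealMl]; apply: in_ideal_genB.
Qed.

Lemma in_ideal_map (R S : comNzRingType) (f : {rmorphism R -> S}) d (A : {poly R})
    (B : 'I_d -> {poly R}) x :
  in_ideal A B x ->
  in_ideal (map_poly f A) (fun i => map_poly f (B i)) (map_poly f x).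
Proof.
move=> [U [V <-]]; exists (map_poly f U), (fun i => map_poly f (V i)).
by rewrite rmorphD rmorph_sum rmorphM; congr (_ + _); apply: eq_bigr => i _; rewrite rmorphM.
Qed.

Section Interpolation.
Variable k : fieldType.
Implicit Types p q r x : {poly k}.

(* The path p + T (q - p) in k[T][X]: T is the coefficient variable, the one [evT] evaluates. *)
Definition interp p q : {poly {poly k}} := p^:P + 'X%:P * (q - p)^:P.

Lemma evT_interp t p q : evT t (interp p q) = p + t%:P * (q - p).
Proof.
rewrite /evT -[fun c => _]/(horner_eval t) rmorphD rmorphM /= map_polyC /= horner_evalE hornerX.
by rewrite -!map_poly_comp !map_poly_id // => x _ /=; rewrite horner_evalE hornerC.
Qed.

Lemma evT_interp0 p q : evT 0 (interp p q) = p.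
Proof. by rewrite evT_interp mul0r addr0. Qed.

Lemma evT_interp1 p q : evT 1 (interp p q) = q.
Proof. by rewrite evT_interp mul1r addrC subrK. Qed.

Lemma interp_id p : interp p p = p^:P.
Proof. by rewrite /interp subrr rmorph0 mulr0 addr0. Qed.

Lemma interpDr p x : interp p (p + x) = p^:P + 'X%:P * x^:P.
Proof. by rewrite /interp (addrC p) addrK. Qed.

Lemma size_XC_mul_leq r : (size ('X%:P * r^:P)%R <= size r)%N.
Proof. by rewrite mul_polyC -[X in (_ <= X)%N](size_map_polyC r) size_scale_leq. Qed.

Lemma size_interp p q n :
  (size p <= n)%N -> (size q <= n)%N -> (size (interp p q) <= n)%N.
Proof.
move=> sp sq; have sqp : (size (q - p)%R <= n)%N.
  by apply: leq_trans (size_polyD _ _) _; rewrite size_polyN geq_max sq sp.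
apply: leq_trans (size_polyD _ _) _.
by rewrite geq_max size_map_polyC sp (leq_trans (size_XC_mul_leq _)).
Qed.

Lemma size_sub_monic p q :
  p \is monic -> q \is monic -> size p = size q -> (size (q - p)%R < size p)%N.
Proof.
move=> mp mq spq; have := monic_neq0 mp; rewrite -size_poly_eq0.
case sp: (size p) => [//|n] _; apply/leq_sizeP => j; rewrite coefB.
rewrite leq_eqVlt => /orP[/eqP <-|ltnj]; last by rewrite !nth_default ?subr0 -?spq ?sp.
by move: (monicP mp) (monicP mq); rewrite /lead_coef -spq sp => -> ->; rewrite subrr.
Qed.

Lemma monic_interp p q :
  p \is monic -> q \is monic -> size p = size q ->
  interp p q \is monic /\ size (interp p q) = size p.
Proof.
move=> mp mq spq; have lt_qp : (size ('X%:P * (q - p)^:P)%R < size p^:P)%N.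
  by rewrite size_map_polyC (leq_ltn_trans (size_XC_mul_leq _)) ?size_sub_monic.
split; first by rewrite monicE lead_coefDl // lead_coef_map /= (monicP mp).
by rewrite size_polyDl // size_map_polyC.
Qed.

End Interpolation.

Section NaiveHomotopy.
Variables (k : fieldType) (d : nat).
Implicit Types f g : ptmap k d.

Lemma size_pm_B f l : (size (pm_B f l) <= pm_deg f)%N.
Proof. by case: f => n A B []. Qed.

Lemma naive_equiv_trans f g h :
  naive_equiv f g -> naive_equiv g h -> naive_equiv f h.
Proof. exact: rst_trans. Qed.

Lemma naive_equiv_sym f g : naive_equiv f g -> naive_equiv g f.
Proof. exact: rst_sym. Qed.

Lemma naive_equiv_deg f g : naive_equiv f g -> pm_deg f = pm_deg g.
Proof. by elim=> [? ? [n [? [? [_ [-> _] [-> _]]]]] | | ? ? _ -> | ? ? ? _ -> _ ->]. Qed.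

Lemma naive_htpy_interp f g :
  pm_deg f = pm_deg g ->
  in_ideal (interp (pm_A f) (pm_A g)) (fun i => interp (pm_B f i) (pm_B g i)) 1 ->
  naive_htpy f g.
Proof.
case: f g => n A B [mA sA sB ?] [m A' B' [mA' sA' sB' ?]] /= eq_nm I1; subst m.
exists n, (interp A A'), (fun i => interp (B i) (B' i)); split.
- have [] := monic_interp mA mA' (etrans sA (esym sA')).
  by rewrite sA; split=> // i; apply: size_interp.
- by rewrite evT_interp0; do 2!split=> //; move=> i; rewrite evT_interp0.
- by rewrite evT_interp1; do 2!split=> //; move=> i; rewrite evT_interp1.
Qed.

Lemma naive_equiv_addB f (i j : 'I_d) (c : {poly k}) :
  i != j -> (size (pm_B f j + c * pm_B f i)%R <= pm_deg f)%N ->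
  exists g, [/\ naive_equiv f g, pm_B g i = pm_B f i & pm_B g j = pm_B f j + c * pm_B f i].
Proof.
case: f => n A B [mA sA sB IAB] /= nij sBj.
have [B' B'B B'j] : exists2 B' : 'I_d -> {poly k},
    forall l, l != j -> B' l = B l & B' j = B j + c * B i.
  by exists [eta B with j |-> B j + c * B i] => [l /negbTE /= ->|/=]; rewrite ?eqxx.
have okB' : inF n A B'.
  split=> // [l|]; last exact: in_ideal_addB nij B'B B'j IAB.
  by have [->|/B'B ->] := eqVneq l j; rewrite ?B'j.
exists (PtMap okB'); split; [|exact: B'B|exact: B'j].
apply/rst_step/naive_htpy_interp => //=; rewrite interp_id.
apply: (@in_ideal_addB _ _ _ (fun l => (B l)^:P) _ i j ('X%:P * c^:P) nij).
- by move=> l /B'B ->; rewrite interp_id.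
- by rewrite B'j interpDr rmorphM mulrA.
- by have := in_ideal_map polyC IAB; rewrite rmorph1.
Qed.

Lemma naive_equiv_euclid f (i j : 'I_d) : i != j ->
  exists2 g, naive_equiv f g & pm_B g i = 0 \/ pm_B g j = 0.
Proof.
move: {2}_.+1 (ltnSn (size (pm_B f i) + size (pm_B f j))) => m.
elim: m i j f => // m IH i j f.
wlog le_ji : i j / (size (pm_B f j) <= size (pm_B f i))%N.
  move=> wlog_ij; have [|/ltnW le_ij] := leqP (size (pm_B f j)) (size (pm_B f i)).
    exact: wlog_ij.
  rewrite addnC eq_sym => hm nji; have [g fg gBji] := wlog_ij j i le_ij hm nji.
  by exists g; last by case: gBji; [right | left].
move=> hm nij; have [Bj0|nzBj] := eqVneq (pm_B f j) 0.
  by exists f; [apply: rst_refl | right].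
have lt_mod := ltn_modpN0 (pm_B f i) nzBj.
have Bi_mod : pm_B f i + - (pm_B f i %/ pm_B f j) * pm_B f j = pm_B f i %% pm_B f j.
  by rewrite {1}(divp_eq (pm_B f i) (pm_B f j)) mulNr addrAC subrr add0r.
have size_mod : (size (pm_B f i %% pm_B f j)%R <= pm_deg f)%N.
  exact: leq_trans (ltnW lt_mod) (leq_trans le_ji (size_pm_B _ _)).
have nji : j != i by rewrite eq_sym.
rewrite -Bi_mod in size_mod.
have [g [fg gBj gBi]] := naive_equiv_addB nji size_mod.
have g_lt : (size (pm_B g i) + size (pm_B g j) < m)%N.
  rewrite gBi gBj Bi_mod; rewrite ltnS in hm; apply: leq_trans _ hm.
  by rewrite ltn_add2r (leq_trans lt_mod le_ji).
have [h gh hB0] := IH i j g g_lt nij.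
by exists h; first exact: naive_equiv_trans fg gh.
Qed.

Lemma naive_equiv_B0 f (i j : 'I_d) : i != j ->
  exists2 g, naive_equiv f g & pm_B g j = 0.
Proof.
move=> nij; have [g fg [gBi|]] := naive_equiv_euclid f nij; last by exists g.
(* Move the zero from slot i to slot j: B_i += B_j, then B_j -= B_i. *)
have nji : j != i by rewrite eq_sym.
have size1 : (size (pm_B g i + 1 * pm_B g j)%R <= pm_deg g)%N.
  by rewrite gBi add0r mul1r size_pm_B.
have [g1 [gg1 g1Bj g1Bi]] := naive_equiv_addB nji size1.
have g1Bj0 : pm_B g1 j + -1 * pm_B g1 i = 0.
  by rewrite g1Bi g1Bj gBi add0r mul1r mulN1r subrr.
have size2 : (size (pm_B g1 j + -1 * pm_B g1 i)%R <= pm_deg g1)%N.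
  by rewrite g1Bj0 size_poly0.
have [g2 [g1g2 _ g2Bj]] := naive_equiv_addB nij size2.
by exists g2; [exact: naive_equiv_trans fg (naive_equiv_trans gg1 g1g2) | rewrite g2Bj].
Qed.

Lemma naive_equiv_Xn_delta f g (l : 'I_d) :
  pm_deg f = pm_deg g -> pm_B f l = 0 ->
  pm_A g = 'X^(pm_deg g) -> (forall m, pm_B g m = (m == l)%:R) -> naive_equiv f g.
Proof.
case: f => n A B [mA sA sB IAB] /= eq_n Bl0 gA gB.
have [B1 B1B B1l] : exists2 B1 : 'I_d -> {poly k},
    forall m, m != l -> B1 m = B m & B1 l = 1.
  by exists [eta B with l |-> 1] => [m /negbTE /= ->|/=]; rewrite ?eqxx.
have ok1 : inF n A B1.
  split=> // [m|]; last by rewrite -B1l; apply: in_ideal_genB.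
  have [->|/B1B ->] := eqVneq m l; rewrite ?B1l ?sB // size_poly1 eq_n.
  by have := size_pm_B g l; rewrite gB eqxx size_poly1.
apply: (@naive_equiv_trans _ (PtMap ok1)); apply/rst_step/naive_htpy_interp => //=.
  rewrite interp_id; have := in_ideal_map polyC IAB; rewrite rmorph1.
  apply: in_ideal_trans; first exact: in_ideal_genA.
  move=> m; have [->|/B1B B1m] := eqVneq m l; first by rewrite Bl0 rmorph0; apply: in_ideal0.
  by rewrite -(interp_id (B m)) -{2}B1m; apply: (in_ideal_genB _ (fun m => interp (B m) (B1 m))).
have := in_ideal_genB (interp A (pm_A g)) (fun m => interp (B1 m) (pm_B g m)) l.
by rewrite B1l gB eqxx interp_id rmorph1.
Qed.

Lemma naive_equiv_deg0 f g : pm_deg f = 0%N -> pm_deg g = 0%N -> naive_equiv f g.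
Proof.
have A1 (h : ptmap k d) : pm_deg h = 0%N -> pm_A h = 1.
  case: h => n A B [mA sA _ _] /= n0; rewrite n0 in sA.
  by rewrite (size1_polyC (eq_leq sA)); move: (monicP mA); rewrite /lead_coef sA => ->.
move=> f0 g0; apply/rst_step/naive_htpy_interp; first by rewrite f0 g0.
rewrite (A1 f f0) (A1 g g0) interp_id rmorph1; exact: in_ideal_genA.
Qed.

Lemma inF_Xn n (l : 'I_d) : (0 < n)%N -> inF n ('X^n : {poly k}) (fun m => (m == l)%:R).
Proof.
move=> n_gt0; split; [exact: monicXn | exact: size_polyXn | |].
  by move=> m; case: (m == l); rewrite ?size_poly1 ?size_poly0.
by have := in_ideal_genB 'X^n (fun m : 'I_d => (m == l)%:R : {poly k}) l; rewrite eqxx.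
Qed.

Lemma inF_deg0 : inF 0 (1 : {poly k}) (fun _ : 'I_d => 0).
Proof.
split; [exact: monic1 | exact: size_poly1 | by move=> m; rewrite size_poly0 |].
exact: in_ideal_genA.
Qed.

End NaiveHomotopy.

Theorem theorem4p12 (k : fieldType) (d : nat) (hd : (2 <= d)%N) :
  (forall f g : ptmap k d, naive_equiv f g -> pm_deg f = pm_deg g) /\
  (forall f g : ptmap k d, pm_deg f = pm_deg g -> naive_equiv f g) /\
  (forall n : nat, exists f : ptmap k d, pm_deg f = n).
Proof.
pose i0 : 'I_d := Ordinal (ltnW hd); pose i1 : 'I_d := Ordinal hd.
have n01 : i0 != i1 by [].
split; first exact: naive_equiv_deg.
split; last by case=> [|n]; [exists (PtMap (inF_deg0 k d)) | exists (PtMap (inF_Xn k i1 (ltn0Sn n)))].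
move=> f g fg; have [f0|f_gt0] := posnP (pm_deg f).
  by apply: naive_equiv_deg0; rewrite -?fg.
pose s := PtMap (inF_Xn k i1 f_gt0).
suff to_s h : pm_deg h = pm_deg f -> naive_equiv h s.
  exact: naive_equiv_trans (to_s f erefl) (naive_equiv_sym (to_s g (esym fg))).
move=> hf; have [h1 hh1 h1B] := naive_equiv_B0 h n01.
have h1s : pm_deg h1 = pm_deg s by rewrite -(naive_equiv_deg hh1).
exact: naive_equiv_trans hh1 (naive_equiv_Xn_delta h1s h1B _ _).
Qed.
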